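(* Let $F$ be a field with $\operatorname{char}F\ne2$, $D$ a finite-dimensional central division $F$-algebra with involution $\ast$, $\eta\in F$ with $\eta\eta^\ast=1$, $n\ge1$, $A\in M_n(D)$ invertible with $\eta A^\ast=A$ (where $[x_{ij}]^\ast=[x_{ji}^\ast]$), and $X^\#=A^{-1}X^\ast A$. If $\eta\neq-1$ or $\ast|_D\neq\mathrm{id}$, then the following are equivalent: (1) $\#$ is formally real on $M_n(D)$; (2) there exists a $1$-hermitian cone on $(M_n(D),\#)$ containing the identity matrix $I$; (3) there exists an $\eta$-hermitian cone on $(M_n(D),\ast)$ containing $A$; (4) there exist an invertible $P\in M_n(D)$ with $P^\ast AP=\mathrm{diag}(d_1,\dots,d_n)$ and an $\eta$-hermitian cone on $(D,\ast)$ containing $d_1,\dots,d_n$. If $\eta=-1$ and $\ast|_D=\mathrm{id}$, then $\#$ is not formally real.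
   Context: An involution $\#$ on a ring $R$ is formally real if every finite sum of nonzero elements of the form $rr^\#$ ($r\in R$) is nonzero. For a ring $R$ with involution $\ast$ whose center contains $F$ with $F^\ast\subseteq F$, and $\varepsilon\in F$ with $\varepsilon\varepsilon^\ast=1$, an element $a\in R$ is $\varepsilon$-hermitian if $\varepsilon a^\ast=a$; $S_\varepsilon(R)$ is the set of such elements. An $\varepsilon$-hermitian cone on $(R,\ast)$ is a subset $M\subseteq S_\varepsilon(R)$ with $M+M\subseteq M$, $aMa^\ast\subseteq M$ for every $a\in R$, and $M\cap-M=\{0\}$. *)

From HB Require Import structures.
From mathcomp Require Import all_boot all_order all_algebra all_field.
Set Implicit Arguments. Unset Strict Implicit. Unset Printing Implicit Defensive.
Import GRing.Theory.
Local Open Scope ring_scope.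

Definition is_involution (R : nzRingType) (s : R -> R) : Prop :=
  [/\ forall x y, s (x + y) = s x + s y,
      forall x y, s (x * y) = s y * s x &
      forall x, s (s x) = x].

Definition formally_real (R : nzRingType) (s : R -> R) : Prop :=
  forall l : seq R, l != [::] -> all (fun r => r * s r != 0) l ->
    \sum_(r <- l) r * s r != 0.

Definition eps_herm (R : nzRingType) (s : R -> R) (eps a : R) : Prop :=
  eps * s a = a.

Definition herm_cone (R : nzRingType) (s : R -> R) (eps : R) (M : R -> Prop)
  : Prop :=
  [/\ forall a, M a -> eps_herm s eps a,
      forall a b, M a -> M b -> M (a + b),
      forall a x, M x -> M (a * x * s a),
      M 0 &
      forall x, M x -> M (- x) -> x = 0].

Definition mstar (D : nzRingType) (s : D -> D) (n : nat) (X : 'M[D]_n)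
  : 'M[D]_n := (map_mx s X)^T.

(* X^# = A^{-1} X^* A, where Ainv is the (two-sided) inverse of A. *)
Definition sharp (D : nzRingType) (s : D -> D) (n : nat) (A Ainv X : 'M[D]_n)
  : 'M[D]_n := Ainv *m mstar s X *m A.

(* The
   four conditions are linked by three general facts:
   - (1) <-> (2) holds for any ring with involution: a formally real
     involution makes the finite sums of norms r r^# a 1-hermitian cone, and
     a 1-hermitian cone containing 1 contains all sums of norms.
   - (2) <-> (3) holds for any ring: left multiplication by A carries
     1-hermitian cones of the adjoint involution to eta-hermitian cones of
     the original one, sending 1 to A.
   - (3) <-> (4) uses that an invertible eta-hermitian matrix over a division
     ring is congruent to a diagonal one (pivot and clear row by row); the
     corner entries of a matrix cone give a cone of D, and conversely the
     matrices whose hermitian form takes values in a cone of D form a cone.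
   The key algebraic input is that c l + l^* eta c^* vanishes for all l only
   if c = 0, unless eta = -1 and * = id.  In that exceptional case A^-1 is
   alternating and two explicit norms cancel, so # is not formally real. *)

From HB Require Import structures.
From mathcomp Require Import all_boot all_order all_algebra all_field.
From Stdlib Require Import Classical.
Set Implicit Arguments. Unset Strict Implicit. Unset Printing Implicit Defensive.
Import GRing.Theory.
Local Open Scope ring_scope.

Section RingInvolution.
Variables (R : nzRingType) (s : R -> R).
Hypothesis sI : is_involution s.

Lemma invD x y : s (x + y) = s x + s y. Proof. by case: sI. Qed.
Lemma invM x y : s (x * y) = s y * s x. Proof. by case: sI. Qed.
Lemma invK : involutive s. Proof. by case: sI. Qed.

Lemma inv0 : s 0 = 0.
Proof. by apply: (addrI (s 0)); rewrite -invD !addr0. Qed.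

Lemma invN x : s (- x) = - s x.
Proof. by apply/eqP; rewrite -addr_eq0 -invD addNr inv0. Qed.

Lemma inv1 : s 1 = 1.
Proof. by rewrite -[s 1]mulr1 -[X in _ * X](invK 1) -invM mulr1 invK. Qed.

Lemma inv_sum I (r : seq I) (f : I -> R) :
  s (\sum_(i <- r) f i) = \sum_(i <- r) s (f i).
Proof. exact: (big_morph s invD inv0). Qed.

Lemma inv_norm r : s (r * s r) = r * s r.
Proof. by rewrite invM invK. Qed.

Definition sum_norms (x : R) : Prop :=
  exists l : seq R, x = \sum_(r <- l) r * s r.

Lemma sum_norms_eq0 (l : seq R) : formally_real s ->
  \sum_(r <- l) r * s r = 0 -> forall r, r \in l -> r * s r = 0.
Proof.
move=> fr sum0 r rl; apply/eqP/negPn/negP => rr_neq0.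
pose l' := [seq x <- l | x * s x != 0].
have sum'0 : \sum_(x <- l') x * s x = 0.
  rewrite big_filter big_mkcond -[RHS]sum0; apply: eq_bigr => x _.
  by case: eqP.
have all' : all (fun x => x * s x != 0) l' := filter_all _ _.
have : r \in l' by rewrite mem_filter rr_neq0.
case: l' sum'0 all' => // x l' sum'0 all' _.
by move: (fr (x :: l') isT all'); rewrite sum'0 eqxx.
Qed.

Lemma sum_norms_cone : formally_real s -> herm_cone s 1 sum_norms.
Proof.
move=> fr; split.
- move=> _ [l ->]; rewrite /eps_herm mul1r inv_sum.
  by apply: eq_bigr => r _; apply: inv_norm.
- by move=> _ _ [l1 ->] [l2 ->]; exists (l1 ++ l2); rewrite big_cat.
- move=> a _ [l ->]; exists [seq a * r | r <- l].
  rewrite big_map mulr_sumr mulr_suml; apply: eq_bigr => r _.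
  by rewrite invM !mulrA.
- by exists [::]; rewrite big_nil.
move=> x [l xE] [l' xE']; have sum0 : \sum_(r <- l ++ l') r * s r = 0.
  by rewrite big_cat -xE -xE'; apply: subrr.
rewrite xE big_seq big1 // => r rl.
by apply: (sum_norms_eq0 fr sum0); rewrite mem_cat rl.
Qed.

(* Conversely, a 1-hermitian cone containing 1 contains all sums of norms
   and so forces formal reality. *)
Lemma cone_formally_real (M : R -> Prop) : herm_cone s 1 M -> M 1 ->
  formally_real s.
Proof.
move=> [_ MD Mconj M0 Manti] M1 [//|r l] _ /= /andP [rr_neq0 _].
have Mnorm r' : M (r' * s r') by have := Mconj r' 1 M1; rewrite mulr1.
have Msum (l0 : seq R) : M (\sum_(x <- l0) x * s x).
  by elim: l0 => [|x l0 IH]; rewrite ?big_nil ?big_cons //; apply: MD.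
rewrite big_cons; apply: contra rr_neq0 => /eqP sum0; apply/eqP.
apply: Manti (Mnorm r) _; suff -> : - (r * s r) = \sum_(x <- l) x * s x by [].
by apply/eqP; rewrite eq_sym -addr_eq0 addrC sum0.
Qed.

Lemma formally_real_cone :
  formally_real s <-> exists M, herm_cone s 1 M /\ M 1.
Proof.
split=> [fr | [M [Mcone M1]]]; last exact: cone_formally_real Mcone M1.
exists sum_norms; split; first exact: sum_norms_cone.
by exists [:: 1]; rewrite big_seq1 inv1 mulr1.
Qed.

End RingInvolution.

Section AdjointInvolution.
Variables (R : nzRingType) (s : R -> R) (e A Ainv : R).
Hypotheses (sI : is_involution s) (e_central : forall x, e * x = x * e).
Hypotheses (e_unitary : e * s e = 1) (AAinv : A * Ainv = 1) (AinvA : Ainv * A = 1).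
Hypothesis A_herm : e * s A = A.

Definition adjoint (x : R) : R := Ainv * s x * A.

Lemma inv_e_central x : s e * x = x * s e.
Proof. by apply: (can_inj (invK sI)); rewrite !(invM sI) (invK sI) e_central. Qed.

Lemma invA : s A = s e * A.
Proof. by rewrite -[in RHS]A_herm mulrA inv_e_central e_unitary mul1r. Qed.

Lemma invAinv : s Ainv = e * Ainv.
Proof.
have sA_eAinv : s A * (e * Ainv) = 1.
  by rewrite invA e_central !mulrA -(mulrA _ A) AAinv mulr1 inv_e_central.
by rewrite -[LHS]mulr1 -sA_eAinv mulrA -(invM sI) AAinv (inv1 sI) mul1r.
Qed.

Lemma adjoint_conj a : adjoint (Ainv * a * A) = s a.
Proof.
rewrite /adjoint !(invM sI) invA invAinv !mulrA -inv_e_central -(mulrA _ Ainv).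
by rewrite AinvA mulr1 -(mulrA (s e)) AinvA mulr1 -e_central mulrA e_unitary mul1r.
Qed.

Lemma inv_conj_adjoint b : s (A * b * Ainv) = adjoint b.
Proof. by rewrite -adjoint_conj !mulrA AinvA mul1r -mulrA AinvA mulr1. Qed.

(* Hence A * x is e-hermitian for s exactly when x is 1-hermitian for the
   adjoint. *)
Lemma herm_mulA x : e * s (A * x) = A * adjoint x.
Proof.
rewrite (invM sI) invA /adjoint !mulrA AAinv mul1r e_central.
by rewrite -(mulrA (s x)) e_unitary mulr1.
Qed.

Lemma adjoint_involution : is_involution adjoint.
Proof.
split=> [x y | x y | x]; last by rewrite adjoint_conj (invK sI).
  by rewrite /adjoint (invD sI) mulrDr mulrDl.
by rewrite /adjoint (invM sI) !mulrA -(mulrA _ A Ainv) AAinv mulr1.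
Qed.

Lemma mulAK : cancel (fun x => A * x) (fun y => Ainv * y).
Proof. by move=> x; rewrite mulrA AinvA mul1r. Qed.

Lemma mulAinvK : cancel (fun y => Ainv * y) (fun x => A * x).
Proof. by move=> y; rewrite mulrA AAinv mul1r. Qed.

Lemma herm_cone_mulA (M : R -> Prop) :
  herm_cone adjoint 1 M -> herm_cone s e (fun y => M (Ainv * y)).
Proof.
move=> [Mherm MD Mconj M0 Manti]; split.
- move=> y /Mherm; rewrite /eps_herm !mul1r => hy.
  by have := herm_mulA (Ainv * y); rewrite hy !mulAinvK.
- by move=> y1 y2 My1 My2; rewrite mulrDr; apply: MD.
- move=> a y My; have := Mconj (Ainv * a * A) _ My.
  by rewrite adjoint_conj !mulrA -(mulrA _ A) AAinv mulr1.
- by rewrite mulr0.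
move=> y My; rewrite mulrN => /(Manti _ My) Ainv_y0.
by rewrite -[y]mulAinvK /= Ainv_y0 mulr0.
Qed.

Lemma herm_cone_mulAinv (M : R -> Prop) :
  herm_cone s e M -> herm_cone adjoint 1 (fun x => M (A * x)).
Proof.
move=> [Mherm MD Mconj M0 Manti]; split.
- move=> x /Mherm; rewrite /eps_herm mul1r herm_mulA.
  by move/(congr1 (fun y => Ainv * y)); rewrite !mulAK.
- by move=> x1 x2 Mx1 Mx2; rewrite mulrDr; apply: MD.
- move=> b x Mx; have := Mconj (A * b * Ainv) _ Mx.
  by rewrite inv_conj_adjoint !mulrA -(mulrA _ Ainv A) AinvA mulr1.
- by rewrite mulr0.
move=> x Mx; rewrite mulrN => /(Manti _ Mx) A_x0.
by rewrite -[x]mulAK /= A_x0 mulr0.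
Qed.

Lemma adjoint_cone_iff :
  (exists M, herm_cone adjoint 1 M /\ M 1) <->
  (exists M, herm_cone s e M /\ M A).
Proof.
split=> [[M [Mcone M1]] | [M [Mcone MA]]].
  by exists (fun y => M (Ainv * y)); split; [exact: herm_cone_mulA | rewrite AinvA].
by exists (fun x => M (A * x)); split; [exact: herm_cone_mulAinv | rewrite mulr1].
Qed.

End AdjointInvolution.

Section ConjugateTranspose.
Variables (D : nzRingType) (s : D -> D).
Hypothesis sI : is_involution s.
Variable n : nat.
Local Notation N := n.+1.
Local Notation ms := (@mstar D s N).

Lemma mstarE X i j : ms X i j = s (X j i).
Proof. by rewrite !mxE. Qed.

Lemma mstarD X Y : ms (X + Y) = ms X + ms Y.
Proof. by apply/matrixP=> i j; rewrite !(mstarE, mxE) (invD sI). Qed.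

Lemma mstarM X Y : ms (X *m Y) = ms Y *m ms X.
Proof.
apply/matrixP=> i j; rewrite !(mstarE, mxE) (inv_sum sI); apply: eq_bigr => k _.
by rewrite (invM sI) !mstarE.
Qed.

Lemma mstarK : involutive ms.
Proof. by move=> X; apply/matrixP=> i j; rewrite !mstarE (invK sI). Qed.

Lemma mstar_scalar c : ms c%:M = (s c)%:M.
Proof.
apply/matrixP=> i j; rewrite mstarE !mxE eq_sym.
by case: (i == j); rewrite ?mulr1n ?mulr0n ?(inv0 sI).
Qed.

Lemma mstar1 : ms 1%:M = 1%:M.
Proof. by rewrite mstar_scalar (inv1 sI). Qed.

Lemma mstar_involution : is_involution ms.
Proof. by split; [exact: mstarD | exact: mstarM | exact: mstarK]. Qed.

Lemma scalar_mx_central c (X : 'M[D]_N) :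
  (forall x, c * x = x * c) -> c%:M *m X = X *m c%:M.
Proof.
move=> c_central; apply/matrixP=> i j; rewrite mul_scalar_mx !mxE (bigD1 j) //=.
rewrite big1 ?addr0 => [|k /negbTE kj]; last by rewrite mxE kj mulr0n mulr0.
by rewrite mxE eqxx mulr1n c_central.
Qed.

Lemma scalar_mx_unitary c : c * s c = 1 -> c%:M * ms c%:M = 1.
Proof.
move=> c_unitary; change (c%:M *m ms c%:M = 1%:M).
by rewrite mstar_scalar -scalar_mxM c_unitary.
Qed.

(* Entries of a sum, without unfolding matrix products. *)
Lemma mxaddE (X Y : 'M[D]_N) i j : (X + Y) i j = X i j + Y i j.
Proof. by rewrite mxE. Qed.

Definition mxunit (a : D) (p q : 'I_N) : 'M[D]_N :=
  \matrix_(i, j) (if (i == p) && (j == q) then a else 0).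

Lemma mxunitE a p q i j : mxunit a p q i j = if (i == p) && (j == q) then a else 0.
Proof. by rewrite mxE. Qed.

Lemma mul_mxunit_mx a p q (X : 'M[D]_N) i j :
  (mxunit a p q *m X) i j = if i == p then a * X q j else 0.
Proof.
rewrite mxE (bigD1 q) //= mxunitE eqxx andbT big1 ?addr0.
  by case: (i == p); rewrite ?mul0r.
by move=> k /negbTE kq; rewrite mxunitE kq andbF mul0r.
Qed.

Lemma mul_mx_mxunit (X : 'M[D]_N) b p q i j :
  (X *m mxunit b p q) i j = if j == q then X i p * b else 0.
Proof.
rewrite mxE (bigD1 p) //= mxunitE eqxx /= big1 ?addr0.
  by case: (j == q); rewrite ?mulr0.
by move=> k /negbTE kq; rewrite mxunitE kq mulr0.
Qed.

Lemma mxunit_sandwich a p q (X : 'M[D]_N) b p' q' :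
  mxunit a p q *m X *m mxunit b p' q' = mxunit (a * X q p' * b) p q'.
Proof.
apply/matrixP=> i j; rewrite mul_mx_mxunit mxunitE mul_mxunit_mx.
by case: (j == q'); case: (i == p); rewrite ?andbF ?andbT ?mul0r.
Qed.

Lemma mstar_mxunit a p q : ms (mxunit a p q) = mxunit (s a) q p.
Proof.
by apply/matrixP=> i j; rewrite mstarE !mxunitE andbC; case: (_ && _); rewrite ?(inv0 sI).
Qed.

Lemma mxunitD a b p q : mxunit (a + b) p q = mxunit a p q + mxunit b p q.
Proof. by apply/matrixP=> i j; rewrite !mxE; case: (_ && _); rewrite ?addr0. Qed.

Lemma mxunitN a p q : mxunit (- a) p q = - mxunit a p q.
Proof. by apply/matrixP=> i j; rewrite !mxE; case: (_ && _); rewrite ?oppr0. Qed.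

Lemma mxunit0 p q : mxunit 0 p q = 0.
Proof. by apply/matrixP=> i j; rewrite !mxE; case: (_ && _). Qed.

End ConjugateTranspose.

Section DivisionRing.
Variables (D : unitRingType) (s : D -> D) (e : D).
Hypotheses (sI : is_involution s) (division : forall x : D, x != 0 -> x \is a GRing.unit).
Hypothesis two_reg : forall b : D, b + b = 0 -> b = 0.
Hypothesis nondegenerate : ~ (e = -1 /\ forall x, s x = x).

(* The sesquilinear expression c l + l^s e c^s vanishes identically only for
   c = 0: otherwise l^s = c l c^-1, so s is a ring automorphism and an
   anti-automorphism, D is commutative, s = id and e = -1. *)
Lemma sesqui_vanish c : (forall l, c * l + s l * (e * s c) = 0) -> c = 0.
Proof.
move=> vanish; apply/eqP/negPn/negP => /division c_unit.
have ec : e * s c = - c.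
  by apply/eqP; rewrite -addr_eq0 addrC; have := vanish 1; rewrite mulr1 (inv1 sI) mul1r => ->.
have sE l : s l = c * l * c^-1.
  have /eqP := vanish l; rewrite ec mulrN subr_eq0 => /eqP ->.
  by rewrite mulrK.
have comm (x y : D) : x * y = y * x.
  have := invM sI x y; rewrite !sE.
  have -> : c * y * c^-1 * (c * x * c^-1) = c * (y * x) * c^-1.
    by rewrite !mulrA mulrVK.
  have cV_unit : c^-1 \is a GRing.unit by rewrite unitrV.
  by move/(mulIr cV_unit)/(mulrI c_unit).
have s_id (x : D) : s x = x by rewrite sE (comm c x) mulrK.
apply: nondegenerate; split=> //; apply/eqP; rewrite -addr_eq0.
by apply/eqP/(mulIr c_unit); rewrite mul0r mulrDl mul1r -[c in e * c]s_id ec addNr.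
Qed.

(* Hence, for c != 0, some l gives a nonzero value of the hermitian form
   [[0, c], [e c^s, b]] at the vector (1, l). *)
Lemma exists_nonisotropic c b :
  c != 0 -> exists l, c * l + s l * (e * s c) + s l * b * l != 0.
Proof.
move=> c_neq0; apply: NNPP => no_l.
have vanish l : c * l + s l * (e * s c) + s l * b * l = 0.
  by apply: NNPP => l_neq0; apply: no_l; exists l; apply/eqP.
have b0 : b = 0.
  apply: two_reg; have := vanish 1; have := vanish (-1).
  rewrite (invN sI) (inv1 sI) !mulrN1 !mulN1r !mulr1 !mul1r opprK => v_neg v_pos.
  have : (c + e * s c + b) + (- c - e * s c + b) = 0 by rewrite v_pos v_neg addr0.
  by rewrite addrACA -opprD subrr add0r.
apply/(negP c_neq0)/eqP/sesqui_vanish => l.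
by have := vanish l; rewrite b0 mulr0 mul0r addr0.
Qed.

End DivisionRing.

Section HermitianMatrices.
Variables (D : nzRingType) (s : D -> D) (e : D) (n : nat).
Hypotheses (sI : is_involution s) (e_central : forall x, e * x = x * e).
Local Notation N := n.+1.
Local Notation ms := (@mstar D s N).

Definition herm_mx (B : 'M[D]_N) : Prop := forall i j, B j i = e * s (B i j).

Lemma herm_mxP B : eps_herm ms e%:M B <-> herm_mx B.
Proof.
change (e%:M *m ms B = B <-> herm_mx B).
have entry (i j : 'I_N) : (e%:M *m ms B) j i = e * s (B i j).
  by rewrite mul_scalar_mx !mxE.
split=> [Bherm i j | Bherm]; first by rewrite -entry Bherm.
by apply/matrixP => i j; rewrite entry -Bherm.
Qed.

(* Invertibility in the (possibly noncommutative) matrix ring. *)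
Definition invertible (P : 'M[D]_N) : Prop :=
  exists Q, P *m Q = 1%:M /\ Q *m P = 1%:M.

Lemma invertibleM P Q : invertible P -> invertible Q -> invertible (P *m Q).
Proof.
move=> [P' [PP' P'P]] [Q' [QQ' Q'Q]]; exists (Q' *m P'); split.
  by rewrite mulmxA -(mulmxA P) QQ' mulmx1 PP'.
by rewrite mulmxA -(mulmxA Q') P'P mulmx1 Q'Q.
Qed.

Lemma mstar_invertible P : invertible P -> invertible (ms P).
Proof.
move=> [Q [PQ QP]]; exists (ms Q).
by rewrite -!(mstarM sI) PQ QP (mstar1 sI).
Qed.

Lemma invertible_row_neq0 B k : invertible B -> exists j, B k j != 0.
Proof.
move=> [C [BC _]]; apply/existsP; apply: contraT; rewrite negb_exists => /forallP B_k0.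
move/matrixP: BC => /(_ k k); rewrite !mxE eqxx big1 => [/eqP|j _].
  by rewrite eq_sym oner_eq0.
by move/negPn/eqP: (B_k0 j) => ->; rewrite mul0r.
Qed.

Definition cong (P B : 'M[D]_N) : 'M[D]_N := ms P *m B *m P.

Lemma congM P Q B : cong (P *m Q) B = cong Q (cong P B).
Proof. by rewrite /cong (mstarM sI) !mulmxA. Qed.

Lemma cong_herm P B : herm_mx B -> herm_mx (cong P B).
Proof.
rewrite -!herm_mxP /eps_herm /cong => Bherm.
change (e%:M *m ms (ms P *m B *m P) = ms P *m B *m P).
rewrite !(mstarM sI) (mstarK sI) !mulmxA (scalar_mx_central _ e_central).
by rewrite -(mulmxA (ms P)) [e%:M *m _]Bherm.
Qed.

Lemma cong_invertible P B : invertible P -> invertible B -> invertible (cong P B).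
Proof.
move=> Pinv Binv; apply: invertibleM => //.
by apply: invertibleM => //; apply: mstar_invertible.
Qed.

Lemma unipotent_invertible X : X *m X = 0 -> invertible (1%:M + X).
Proof.
move=> XX0; exists (1%:M - X); split.
  by rewrite mulmxDl mul1mx mulmxBr mulmx1 XX0 subr0 subrK.
by rewrite mulmxBl mul1mx mulmxDr mulmx1 XX0 addr0 addrK.
Qed.

Lemma cong_unipotent X B :
  cong (1%:M + X) B = B + B *m X + ms X *m B + ms X *m B *m X.
Proof.
rewrite /cong (mstarD sI) (mstar1 sI) !(mulmxDl, mulmxDr) !(mul1mx, mulmx1).
by rewrite !addrA (addrAC B).
Qed.

Lemma cone_cong (M : 'M[D]_N -> Prop) P B :
  herm_cone ms e%:M M -> M B -> M (cong P B).
Proof. by move=> [_ _ Mconj _ _] /(Mconj (ms P)); rewrite (mstarK sI). Qed.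

Lemma cong_mxunit a p q B : cong (mxunit a p q) B = mxunit (s a * B p p * a) q q.
Proof. by rewrite /cong (mstar_mxunit sI) mxunit_sandwich. Qed.

End HermitianMatrices.

Section DiagonalForms.
Variables (D : unitRingType) (s : D -> D) (e : D).
Hypotheses (sI : is_involution s) (e_central : forall x, e * x = x * e).
Hypotheses (division : forall x : D, x != 0 -> x \is a GRing.unit).
Hypothesis two_reg : forall b : D, b + b = 0 -> b = 0.
Hypothesis nondegenerate : ~ (e = -1 /\ forall x, s x = x).
Variable n : nat.
Local Notation N := n.+1.
Local Notation ms := (@mstar D s N).

Definition partial_diag (k : nat) (B : 'M[D]_N) : Prop :=
  forall i j : 'I_N, (i < k)%N -> i != j -> B i j = 0.

(* Pivoting: by a transvection 1 + l E_jk, make the k-th diagonal entry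
   nonzero without disturbing the first k rows. *)
Lemma pivot_step (k : 'I_N) B : herm_mx s e B -> invertible B -> partial_diag k B ->
  exists P, [/\ invertible P, partial_diag k (cong s P B) & cong s P B k k != 0].
Proof.
move=> Bherm Binv Bdiag.
have [Bkk0 | Bkk_neq0] := eqVneq (B k k) 0; last first.
  exists 1%:M; rewrite /cong (mstar1 sI) mul1mx mulmx1.
  by split=> //; exists 1%:M; rewrite mulmx1.
have [j Bkj_neq0] := invertible_row_neq0 k Binv.
have jk : j != k by apply: contraNneq Bkj_neq0 => ->; rewrite Bkk0.
have j_ge : ~~ (j < k)%N.
  by apply: contra Bkj_neq0 => j_lt; rewrite Bherm (Bdiag j k j_lt jk) (inv0 sI) mulr0.
have [l l_neq0] := exists_nonisotropic sI division two_reg nondegenerate (B j j) Bkj_neq0.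
have XX0 : mxunit l j k *m mxunit l j k = 0.
  rewrite -{1}[mxunit l j k]mulmx1 mxunit_sandwich mxE eq_sym (negbTE jk).
  by rewrite mulr0n mulr0 mul0r mxunit0.
exists (1%:M + mxunit l j k); split; first exact: unipotent_invertible.
  move=> i m i_lt im.
  have ik : (i == k) = false by apply: contraTF i_lt => /eqP ->; rewrite ltnn.
  have ij : i != j by apply: contraTneq i_lt => ->.
  rewrite cong_unipotent // (mstar_mxunit sI) mxunit_sandwich !mxaddE mxunitE ik.
  rewrite mul_mx_mxunit mul_mxunit_mx ik (Bdiag i m i_lt im) (Bdiag i j i_lt ij) mul0r.
  by case: (m == k); rewrite !addr0.
rewrite cong_unipotent // (mstar_mxunit sI) mxunit_sandwich !mxaddE mxunitE !eqxx.
by rewrite mul_mx_mxunit mul_mxunit_mx !eqxx Bkk0 add0r (Bherm k j).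
Qed.

(* Clearing: with a nonzero pivot B_kk, congruence by 1 + X, where the only
   nonzero row of X is row k with entries -(B_kk)^-1 B_km for m > k, clears
   row k. *)
Lemma clear_step (k : 'I_N) B : herm_mx s e B -> partial_diag k B -> B k k != 0 ->
  exists P, invertible P /\ partial_diag k.+1 (cong s P B).
Proof.
move=> Bherm Bdiag /division Bkk_unit.
pose t (m : 'I_N) := if (k < m)%N then - ((B k k)^-1 * B k m) else 0.
pose X : 'M[D]_N := \matrix_(i, m) (if i == k then t m else 0).
have tk : t k = 0 by rewrite /t ltnn.
have mul_mx_X (Y : 'M[D]_N) i m : (Y *m X) i m = Y i k * t m.
  rewrite mxE (bigD1 k) //= big1 ?addr0 => [|x /negbTE xk]; first by rewrite mxE eqxx.
  by rewrite mxE xk mulr0.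
have mul_Xstar_mx (Y : 'M[D]_N) i m : (ms X *m Y) i m = s (t i) * Y k m.
  rewrite mxE (bigD1 k) //= big1 ?addr0 => [|x /negbTE xk]; first by rewrite mstarE mxE eqxx.
  by rewrite mstarE mxE xk (inv0 sI) mul0r.
have XX0 : X *m X = 0 by apply/matrixP => i m; rewrite mul_mx_X mxE tk if_same mul0r mxE.
exists (1%:M + X); split; first exact: unipotent_invertible.
move=> i m i_le im; rewrite cong_unipotent // !mxaddE !mul_mx_X !mul_Xstar_mx.
case: (ltnP i k) => [i_lt | i_ge].
  have ti : t i = 0 by rewrite /t ltnNge (ltnW i_lt).
  have ik : i != k by apply: contraTneq i_lt => ->; rewrite ltnn.
  by rewrite ti (inv0 sI) !mul0r (Bdiag i m i_lt im) (Bdiag i k i_lt ik) mul0r !addr0.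
have ik : i = k by apply: val_inj; apply/eqP; rewrite eqn_leq -ltnS i_le i_ge.
subst i.
rewrite tk (inv0 sI) !mul0r !addr0 /t; case: ltnP => [k_lt | m_le].
  by rewrite mulrN mulVKr // subrr.
have m_lt : (m < k)%N by rewrite ltn_neqAle m_le andbT eq_sym.
by rewrite mulr0 addr0 (Bherm m k) (Bdiag m k m_lt) ?(inv0 sI) ?mulr0 // eq_sym.
Qed.

Lemma herm_diagonalization (B : 'M[D]_N) : herm_mx s e B -> invertible B ->
  exists P, invertible P /\ is_diag_mx (cong s P B).
Proof.
move=> Bherm Binv.
suff /(_ N (leqnn N)) [P [Pinv Pdiag]] : forall k, (k <= N)%N ->
    exists P, invertible P /\ partial_diag k (cong s P B).
  by exists P; split=> //; apply/is_diag_mxP => i j ij; apply: Pdiag.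
elim=> [_ | k IH k_lt].
  by exists 1%:M; split=> [|i]; [exists 1%:M; rewrite mulmx1 | rewrite ltn0].
have [P [Pinv Pdiag]] := IH (ltnW k_lt).
pose B1 := cong s P B; pose kk : 'I_N := Ordinal k_lt.
have B1herm : herm_mx s e B1 by apply: cong_herm.
have B1inv : invertible B1 by apply: cong_invertible.
have [Q [Qinv Qdiag Qpivot]] := pivot_step (k := kk) B1herm B1inv Pdiag.
have [R [Rinv Rdiag]] := clear_step (cong_herm sI e_central Q B1herm) Qdiag Qpivot.
exists (P *m Q *m R); split; first by apply: invertibleM => //; apply: invertibleM.
by rewrite !congM.
Qed.

Lemma corner_cone (M : 'M[D]_N -> Prop) :
  herm_cone ms e%:M M -> herm_cone s e (fun c => M (mxunit c 0 0)).
Proof.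
move=> Mcone; case: (Mcone) => Mherm MD _ M0 Manti; split.
- by move=> c /Mherm/herm_mxP/(_ 0 0); rewrite !mxunitE eqxx /= => cE; rewrite /eps_herm -cE.
- by move=> a b Ma Mb; rewrite mxunitD; apply: MD.
- move=> a c /(cone_cong sI (mxunit (s a) 0 0) Mcone).
  by rewrite cong_mxunit // mxunitE eqxx (invK sI).
- by rewrite mxunit0.
move=> c Mc; rewrite mxunitN => /(Manti _ Mc)/matrixP/(_ 0 0).
by rewrite mxunitE eqxx mxE.
Qed.

(* (3) => (4): diagonalize A by congruence; the diagonal entries lie in the
   cone of corner entries. *)
Lemma cone_diagonal_form (A : 'M[D]_N) (M : 'M[D]_N -> Prop) :
  herm_mx s e A -> invertible A -> herm_cone ms e%:M M -> M A ->
  exists (P Pinv : 'M[D]_N) (d : 'rV[D]_N),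
    [/\ P *m Pinv = 1%:M, Pinv *m P = 1%:M, ms P *m A *m P = diag_mx d &
        exists MD : D -> Prop, herm_cone s e MD /\ forall i, MD (d 0 i)].
Proof.
move=> Aherm Ainv Mcone MA.
have [P [[Pinv [PPinv PinvP]] /diag_mxP [d dE]]] := herm_diagonalization Aherm Ainv.
exists P, Pinv, d; split=> //.
exists (fun c => M (mxunit c 0 0)); split; first exact: corner_cone.
move=> i; have := cone_cong sI (mxunit 1 i 0) Mcone (cone_cong sI P Mcone MA).
by rewrite cong_mxunit // dE mxE eqxx mulr1n (inv1 sI) mul1r mulr1.
Qed.

(* The matrices whose hermitian form takes all its values in MD; for the
   e-hermitian cone MD of (D, s) this is a cone of (M_N(D), ^* ). *)
Definition form_cone (MD : D -> Prop) (Y : 'M[D]_N) : Prop :=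
  herm_mx s e Y /\ forall V, MD (cong s V Y 0 0).

Lemma form_cone_cong MD P Y : form_cone MD Y -> form_cone MD (cong s P Y).
Proof.
by move=> [Yherm YMD]; split=> [|V]; [exact: cong_herm | rewrite -congM].
Qed.

(* A form with values in MD and in -MD vanishes: its diagonal vanishes, and
   then each entry c satisfies the hypothesis of sesqui_vanish. *)
Lemma form_cone_anti MD Y : herm_cone s e MD ->
  form_cone MD Y -> form_cone MD (- Y) -> Y = 0.
Proof.
move=> [_ _ _ _ MDanti] [Yherm YMD] [_ YNMD].
have vanish V : cong s V Y 0 0 = 0.
  by apply: MDanti (YMD V) _; have := YNMD V; rewrite /cong mulmxN mulNmx mxE.
have diag0 i : Y i i = 0.
  by have := vanish (mxunit 1 i 0); rewrite cong_mxunit // mxunitE eqxx (inv1 sI) mul1r mulr1.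
apply/matrixP => i j; rewrite mxE; have [-> // | ij] := eqVneq i j.
apply: (sesqui_vanish sI division nondegenerate) => l.
have := vanish (mxunit 1 i 0 + mxunit l j 0).
rewrite /cong (mstarD sI) !(mstar_mxunit sI) (inv1 sI) !(mulmxDl, mulmxDr).
rewrite !mxunit_sandwich !mxaddE !mxunitE eqxx /= !diag0.
by rewrite !mulr0 !mul0r !mulr1 !mul1r add0r addr0 addrC -Yherm.
Qed.

Lemma form_cone_herm_cone MD : herm_cone s e MD -> herm_cone ms e%:M (form_cone MD).
Proof.
move=> MDcone; case: (MDcone) => _ MDD _ MD0 _; split.
- by move=> Y [/herm_mxP].
- move=> Y1 Y2 [Y1herm Y1MD] [Y2herm Y2MD]; split.
    by move=> i j; rewrite !mxaddE Y1herm Y2herm (invD sI) mulrDr.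
  by move=> V; rewrite /cong mulmxDr mulmxDl mxaddE; apply: MDD; [exact: Y1MD | exact: Y2MD].
- by move=> a Y /(form_cone_cong (ms a)); rewrite /cong (mstarK sI).
- split=> [i j | V]; first by rewrite !mxE (inv0 sI) mulr0.
  by rewrite /cong mulmx0 mul0mx mxE.
by move=> Y; apply: form_cone_anti.
Qed.

(* (4) => (3): A is congruent to diag(d) and the form of diag(d) takes values
   sum_i v_i^s d_i v_i in MD. *)
Lemma diagonal_form_cone (A P Pinv : 'M[D]_N) (d : 'rV[D]_N) (MD : D -> Prop) :
  P *m Pinv = 1%:M -> ms P *m A *m P = diag_mx d ->
  herm_cone s e MD -> (forall i, MD (d 0 i)) ->
  exists M, herm_cone ms e%:M M /\ M A.
Proof.
move=> PPinv dE MDcone MDd; exists (form_cone MD); split; first exact: form_cone_herm_cone.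
have -> : A = cong s Pinv (diag_mx d).
  by rewrite -dE /cong !mulmxA -(mstarM sI) PPinv (mstar1 sI) mul1mx -mulmxA PPinv mulmx1.
apply: form_cone_cong; case: MDcone => MDherm MDD MDconj MD0 _; split.
  move=> i j; rewrite !mxE eq_sym; case: eqVneq => [-> | _].
    by rewrite !mulr1n MDherm.
  by rewrite !mulr0n (inv0 sI) mulr0.
move=> V; rewrite /cong mxE; apply: big_ind => // m _.
by rewrite mul_mx_diag mxE mstarE; have := MDconj (s (V m 0)) _ (MDd m); rewrite (invK sI).
Qed.

End DiagonalForms.

Section AlternatingForms.
Variables (D : unitRingType) (s : D -> D) (n : nat).
Hypotheses (sI : is_involution s) (s_id : forall x, s x = x).
Hypotheses (division : forall x : D, x != 0 -> x \is a GRing.unit).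
Hypothesis two_reg : forall b : D, b + b = 0 -> b = 0.
Local Notation N := n.+1.
Local Notation ms := (@mstar D s N).

(* If s = id and Ainv is alternating, the adjoint involution is not formally
   real: for a nonzero entry c = Ainv_ij (with i = 0), the norms of
   E_ii + c^-1 E_jj and E_ji + c^-1 E_ij are K A and -K A, where
   K = E_ij - E_ji, and K A is nonzero. *)
Lemma alternating_not_formally_real (A Ainv : 'M[D]_N) :
  A *m Ainv = 1%:M -> Ainv *m A = 1%:M -> ms Ainv = (-1)%:M *m Ainv ->
  ~ formally_real (sharp s A Ainv).
Proof.
move=> AAinv AinvA Ainv_skew fr.
have skew i j : Ainv j i = - Ainv i j.
  by move/matrixP: Ainv_skew => /(_ i j); rewrite mstarE s_id mul_scalar_mx mxE mulN1r.
have diag0 i : Ainv i i = 0 by apply: two_reg; rewrite {1}skew addNr.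
have [j c_neq0] := invertible_row_neq0 0 (ex_intro _ A (conj AinvA AAinv)).
have ij : 0 != j by apply: contraNneq c_neq0 => <-; rewrite diag0.
have c_unit := division c_neq0.
set c := Ainv 0 j in c_neq0 c_unit.
have cji : Ainv j 0 = - c by rewrite skew.
pose K : 'M[D]_N := mxunit 1 0 j + mxunit (-1) j 0.
pose r1 : 'M[D]_N := mxunit 1 0 0 + mxunit c^-1 j j.
pose r2 : 'M[D]_N := mxunit 1 j 0 + mxunit c^-1 0 j.
have norm_r1 : r1 * sharp s A Ainv r1 = K *m A.
  change (r1 *m (Ainv *m ms r1 *m A) = K *m A); rewrite !mulmxA; congr (_ *m A).
  rewrite /r1 (mstarD sI) !(mstar_mxunit sI) !s_id !(mulmxDl, mulmxDr) !mxunit_sandwich.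
  rewrite !diag0 cji -/c !mulr0 !mul0r !mxunit0 !mul1r mulrN mulVr // mulrV // mulr1.
  by rewrite add0r addr0 addrC.
have norm_r2 : r2 * sharp s A Ainv r2 = - (K *m A).
  change (r2 *m (Ainv *m ms r2 *m A) = - (K *m A)); rewrite !mulmxA -mulNmx; congr (_ *m A).
  rewrite /r2 (mstarD sI) !(mstar_mxunit sI) !s_id !(mulmxDl, mulmxDr) !mxunit_sandwich.
  rewrite !diag0 cji -/c !mulr0 !mul0r !mxunit0 !mul1r mulrN mulVr // mulrV // mulr1.
  by rewrite add0r addr0 opprD -!mxunitN opprK addrC.
have KA_neq0 : K *m A != 0.
  apply: contraNneq (oner_neq0 D) => KA0.
  move/matrixP: (congr1 (mulmx^~ Ainv) KA0) => /(_ 0 j).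
  rewrite -mulmxA AAinv mulmx1 mul0mx mxaddE !mxunitE !eqxx (negbTE ij) /= addr0 mxE.
  by move=> ->.
have := fr [:: r1; r2] isT.
rewrite /= norm_r1 norm_r2 oppr_eq0 KA_neq0 big_cons big_seq1 norm_r1 norm_r2 addrN eqxx.
by move/(_ isT).
Qed.

End AlternatingForms.

Section AlgebraScalars.
Variables (F : fieldType) (D : algType F).

Lemma alg_central (a : F) (x : D) : a%:A * x = x * a%:A.
Proof. by rewrite mulr_algl mulr_algr. Qed.

Lemma char_neq2_reg : (2%:R : F) != 0 -> forall b : D, b + b = 0 -> b = 0.
Proof.
move=> two_neq0 b bb0; have /eqP : (2%:R : F) *: b = 0 by rewrite scaler_nat mulr2n.
by rewrite scaler_eq0 (negbTE two_neq0) => /eqP.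
Qed.

Lemma alg_eqN1 (a : F) : a%:A = -1 :> D -> a = -1.
Proof.
rewrite -scaleN1r => /eqP; rewrite -subr_eq0 -scalerBl scaler_eq0 oner_eq0 orbF.
by rewrite subr_eq0 => /eqP.
Qed.

End AlgebraScalars.

Theorem corollary1p4
  (F : fieldType) (D : falgType F) (star : D -> D) (eta : F)
  (n : nat) (A Ainv : 'M[D]_n.+1) :
  (* char F <> 2 *)
  (2%:R : F) != 0 ->
  (* D is a division algebra *)
  (forall x : D, x != 0 -> x \is a GRing.unit) ->
  (* D is central over F *)
  (forall z : D, (forall x : D, z * x = x * z) -> exists a : F, z = a%:A) ->
  (* star is an involution on D with F^* \subseteq F *)
  is_involution star ->
  (forall a : F, exists b : F, star a%:A = b%:A) ->
  (* eta eta^* = 1 *)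
  eta%:A * star eta%:A = 1 ->
  (* A invertible with inverse Ainv, and eta A^* = A *)
  A *m Ainv = 1%:M -> Ainv *m A = 1%:M ->
  eps_herm (@mstar D star n.+1) (eta%:A)%:M A ->
  (~ (eta = -1 /\ forall x : D, star x = x) ->
    [<-> formally_real (sharp star A Ainv);
         exists M, herm_cone (sharp star A Ainv) 1 M /\ M 1;
         exists M, herm_cone (@mstar D star n.+1) (eta%:A)%:M M /\ M A;
         exists (P Pinv : 'M[D]_n.+1) (d : 'rV[D]_n.+1),
           [/\ P *m Pinv = 1%:M, Pinv *m P = 1%:M,
               mstar star P *m A *m P = diag_mx d &
               exists M : D -> Prop, herm_cone star (eta%:A) M /\
                 forall i, M (d 0 i)]])
  /\
  (eta = -1 /\ (forall x : D, star x = x) ->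
    ~ formally_real (sharp star A Ainv)).
Proof.
move=> two_neq0 division _ sI _ eta_unitary AAinv AinvA A_herm.
have e_central := @alg_central F D eta.
have two_reg := @char_neq2_reg F D two_neq0.
have msI := mstar_involution sI n.
have E_central (X : 'M[D]_n.+1) : (eta%:A)%:M * X = X * (eta%:A)%:M.
  exact: scalar_mx_central.
have E_unitary := scalar_mx_unitary sI n eta_unitary.
have adjI := adjoint_involution msI E_central E_unitary AAinv AinvA A_herm.
have cone_iff := adjoint_cone_iff msI E_central E_unitary AAinv AinvA A_herm.
split=> [nondeg | [eta_N1 star_id]]; last first.
  apply: (alternating_not_formally_real sI star_id division two_reg AAinv AinvA).
  by rewrite (invAinv msI E_central E_unitary AAinv A_herm) eta_N1 scaleN1r.
have nondeg' : ~ (eta%:A = -1 :> D /\ forall x, star x = x).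
  by move=> [/alg_eqN1 eta_N1 star_id]; apply: nondeg.
have Aherm : herm_mx star eta%:A A by apply/herm_mxP.
have Ainvertible : invertible A by exists Ainv.
tfae.
- by move/(formally_real_cone adjI).
- by move/cone_iff.
- move=> [M [Mcone MA]].
  exact: (cone_diagonal_form sI e_central division two_reg nondeg' Aherm Ainvertible Mcone MA).
move=> [P [Pinv [d [PPinv _ dE [MD [MDcone MDd]]]]]].
apply/(formally_real_cone adjI)/cone_iff.
exact: (diagonal_form_cone sI e_central division nondeg' PPinv dE MDcone MDd).
Qed.
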